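(* Let $G$ be a countably infinite graph. If $G$ has pairwise disjoint ruling sets $F_n$ ($n\in\mathbb{N}$) satisfying $|F_n|\le\log_2 n$ for all sufficiently large $n$, then $G$ is not Ramsey-dense; that is, there is a 2-coloring of the edges of $K_\mathbb{N}$ in which every monochromatic copy of $G$ has upper density $0$.
   Context: A set $X\subseteq V(G)$ is ruling if $X$ is finite and all but finitely many vertices of $V(G)\setminus X$ have a neighbor in $X$. $K_{\mathbb{N}}$ is the complete graph on $\mathbb{N}$; a copy of $G$ is a subgraph isomorphic to $G$, monochromatic if all its edges have the same color. $\overline{d}(V)=\limsup_{t\to\infty}|V\cap\{1,\dots,t\}|/t$; $G$ is Ramsey-dense if every 2-coloring of $K_\mathbb{N}$ has a monochromatic copy of $G$ with positive upper density. *)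

From Stdlib Require Import Reals List ClassicalDescription.
From Coquelicot Require Import Coquelicot.
Import ListNotations.
Open Scope R_scope.

Definition simple_graph {V : Type} (adj : V -> V -> Prop) : Prop :=
  (forall u v, adj u v -> adj v u) /\ (forall v, ~ adj v v).

Definition countably_infinite (V : Type) : Prop :=
  exists e : nat -> V, (forall x y, e x = e y -> x = y) /\ (forall v, exists n, e n = v).

(* A finite set X (given as a duplicate-free list) is ruling if all but finitely
   many vertices outside X have a neighbour in X. *)
Definition ruling {V : Type} (adj : V -> V -> Prop) (X : list V) : Prop :=
  NoDup X /\
  exists L : list V, forall v, ~ In v X -> ~ (exists w, In w X /\ adj v w) -> In v L.

Definition count_upto (S : nat -> Prop) (t : nat) : nat :=
  fold_right Nat.add 0%nat
    (map (fun n => if excluded_middle_informative (S n) then 1%nat else 0%nat) (seq 1 t)).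

Definition upper_density (S : nat -> Prop) : Rbar :=
  LimSup_seq (fun t => INR (count_upto S t) / INR t).

(* colour of the edge {m,n} of K_N under c (only c m n with m < n matters) *)
Definition edge_color (c : nat -> nat -> bool) (m n : nat) : bool :=
  if Nat.ltb m n then c m n else c n m.

(* f : V -> nat injective with adj u v -> f u f v an edge: a copy of G in K_N
   (with vertex set the image of f); monochromatic in colour b. *)
Definition mono_copy {V : Type} (adj : V -> V -> Prop) (c : nat -> nat -> bool)
  (f : V -> nat) : Prop :=
  (forall u v, f u = f v -> u = v) /\
  exists b : bool, forall u v, adj u v -> edge_color c (f u) (f v) = b.

Definition image {V : Type} (f : V -> nat) : nat -> Prop := fun n => exists v, f v = n.

Definition ramsey_dense {V : Type} (adj : V -> V -> Prop) : Prop :=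
  forall c : nat -> nat -> bool,
    exists f : V -> nat, mono_copy adj c f /\ Rbar_lt (Finite 0) (upper_density (image f)).

From Stdlib Require Import Reals List.
From Coquelicot Require Import Coquelicot.
From Stdlib Require Import Arith Lia Lra Bool Classical ClassicalDescription.

(* Colour the edge {m < n} of K_N by the m-th binary digit of n.  Let f be a
   copy of the graph, monochromatic in colour b, and fix a window of indices
   c < n <= c + L.  Each F n being ruling, every vertex v with f v large has,
   for each n of the window, a neighbour w in F n with f w < f v; the edge
   {f w, f v} having colour b, the number f v has digit b at one of the
   positions of the block f(F n).  Hence the image of f eventually lies in the
   set of numbers hitting every block, a 2^P-periodic set.  Counting over one
   period, where the digits are independent, its density is
   prod_n (1 - 2^-|F n|) <= prod_n (1 - 1/n) = c / (c + L), a telescoping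
   product; letting L grow gives upper density 0. *)

Local Open Scope nat_scope.

Definition bit (i x : nat) : bool := Nat.odd (x / 2 ^ i).

Lemma pow2_pos (p : nat) : 0 < 2 ^ p.
Proof. apply Nat.neq_0_lt_0, Nat.pow_nonzero; lia. Qed.

Lemma bit_low (s P q y : nat) : s < P -> bit s (q * 2 ^ P + y) = bit s y.
Proof.
  intros Hs. unfold bit.
  replace (2 ^ P) with (2 * 2 ^ (P - s - 1) * 2 ^ s)
    by (rewrite <- Nat.pow_succ_r', <- Nat.pow_add_r; f_equal; lia).
  rewrite Nat.mul_assoc, Nat.div_add_l by (apply Nat.pow_nonzero; lia).
  replace (q * (2 * 2 ^ (P - s - 1))) with (2 * (q * 2 ^ (P - s - 1))) by ring.
  rewrite Nat.add_comm. apply Nat.odd_add_mul_2.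
Qed.

Lemma bit_top (P q y : nat) : y < 2 ^ P -> bit P (q * 2 ^ P + y) = Nat.odd q.
Proof.
  intros Hy. unfold bit. rewrite Nat.div_add_l by (apply Nat.pow_nonzero; lia).
  now rewrite Nat.div_small, Nat.add_0_r.
Qed.

Definition count_range (a n : nat) (p : nat -> bool) : nat := length (filter p (seq a n)).

Lemma count_range_app (a n m : nat) (p : nat -> bool) :
  count_range a (n + m) p = count_range a n p + count_range (a + n) m p.
Proof. unfold count_range. now rewrite seq_app, filter_app, length_app. Qed.

Lemma count_range_ext (a n : nat) (p q : nat -> bool) :
  (forall x, a <= x < a + n -> p x = q x) -> count_range a n p = count_range a n q.
Proof.
  intros H. unfold count_range. f_equal. apply filter_ext_in.
  intros x Hx. apply in_seq in Hx. apply H. lia.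
Qed.

Lemma count_range_shift (a n : nat) (p : nat -> bool) :
  count_range a n p = count_range 0 n (fun y => p (a + y)).
Proof.
  revert p. induction a as [|a IH]; intros p; [reflexivity|].
  unfold count_range in *. rewrite <- seq_shift, filter_map_swap, length_map.
  apply (IH (fun x => p (S x))).
Qed.

Lemma existsb_ext_in {A : Type} (f g : A -> bool) (l : list A) :
  (forall x, In x l -> f x = g x) -> existsb f l = existsb g l.
Proof.
  induction l as [|x l IH]; intros H; simpl; [reflexivity|].
  rewrite (H x (or_introl eq_refl)), IH by (intros y Hy; apply H; right; exact Hy).
  reflexivity.
Qed.

Lemma forallb_ext_in {A : Type} (f g : A -> bool) (l : list A) :
  (forall x, In x l -> f x = g x) -> forallb f l = forallb g l.
Proof.
  induction l as [|x l IH]; intros H; simpl; [reflexivity|].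
  rewrite (H x (or_introl eq_refl)), IH by (intros y Hy; apply H; right; exact Hy).
  reflexivity.
Qed.

Definition prodl (l : list nat) : nat := fold_right Nat.mul 1 l.

Lemma prodl_pow2_pos (e : nat -> nat) (l : list nat) : 0 < prodl (map (fun n => 2 ^ e n) l).
Proof.
  induction l as [|n l IH]; simpl; [lia|].
  apply Nat.mul_pos_pos; [apply pow2_pos | exact IH].
Qed.

Definition drop_index (j : nat) (Js : list nat) : list nat := filter (fun i => negb (j =? i)) Js.

Lemma drop_index_notin (j : nat) (Js : list nat) : ~ In j Js -> drop_index j Js = Js.
Proof.
  intros Hj. unfold drop_index. induction Js as [|i Js IH]; simpl; [reflexivity|].
  destruct (Nat.eqb_spec j i) as [->|_]; simpl.
  - exfalso; apply Hj; left; reflexivity.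
  - f_equal. apply IH. intros H; apply Hj; right; exact H.
Qed.

Lemma prodl_drop_index (h : nat -> nat) (j : nat) (Js : list nat) : NoDup Js ->
  prodl (map h Js) =
  (if in_dec Nat.eq_dec j Js then h j else 1) * prodl (map h (drop_index j Js)).
Proof.
  induction Js as [|i Js IH]; intros HJ; [reflexivity|].
  apply NoDup_cons_iff in HJ as [Hi HJ].
  unfold drop_index in *. simpl. destruct (Nat.eqb_spec j i) as [->|Hji]; simpl.
  - destruct (Nat.eq_dec i i) as [_|]; [|contradiction].
    fold (drop_index i Js). rewrite (drop_index_notin i Js Hi). lia.
  - rewrite (IH HJ). destruct (Nat.eq_dec i j) as [Heq|Hne]; [congruence|].
    destruct (in_dec Nat.eq_dec j Js); simpl; lia.
Qed.

Section DigitBlocks.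
(* The digit positions are partitioned into blocks, position s lying in
   block [blk s]; we count the numbers having digit b somewhere in each block
   of a given list. *)
Variable blk : nat -> nat.
Variable b : bool.

Definition block_size (P j : nat) : nat :=
  length (filter (fun s => blk s =? j) (seq 0 P)).

Definition hits (P j x : nat) : bool :=
  existsb (fun s => (blk s =? j) && Bool.eqb (bit s x) b) (seq 0 P).

Definition hits_all (P : nat) (Js : list nat) (x : nat) : bool :=
  forallb (fun j => hits P j x) Js.

Lemma block_size_S (P j : nat) :
  block_size (S P) j = block_size P j + (if blk P =? j then 1 else 0).
Proof.
  unfold block_size. rewrite seq_S, filter_app, length_app. simpl.
  destruct (blk P =? j); reflexivity.
Qed.

Lemma hits_S (P j q y : nat) : y < 2 ^ P ->
  hits (S P) j (q * 2 ^ P + y) = hits P j y || (blk P =? j) && Bool.eqb (Nat.odd q) b.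
Proof.
  intros Hy. unfold hits. rewrite seq_S, existsb_app. simpl.
  rewrite bit_top, orb_false_r by exact Hy. f_equal.
  apply existsb_ext_in. intros s Hs. apply in_seq in Hs.
  rewrite bit_low by lia. reflexivity.
Qed.

Lemma hits_all_S (P q y : nat) (Js : list nat) : y < 2 ^ P ->
  hits_all (S P) Js (q * 2 ^ P + y) =
  hits_all P (if Bool.eqb (Nat.odd q) b then drop_index (blk P) Js else Js) y.
Proof.
  intros Hy. unfold hits_all, drop_index.
  induction Js as [|j Js IH]; simpl; [destruct (Bool.eqb _ _); reflexivity|].
  rewrite hits_S, IH by exact Hy.
  destruct (Bool.eqb (Nat.odd q) b), (blk P =? j); simpl;
    rewrite ?andb_false_r, ?orb_false_r, ?orb_true_r; reflexivity.
Qed.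

Lemma count_hits_all_S (P : nat) (Js : list nat) :
  count_range 0 (2 ^ S P) (hits_all (S P) Js) =
  count_range 0 (2 ^ P) (hits_all P Js) +
  count_range 0 (2 ^ P) (hits_all P (drop_index (blk P) Js)).
Proof.
  rewrite Nat.pow_succ_r', Nat.mul_comm, Nat.mul_succ_r, Nat.mul_1_r, count_range_app,
    (count_range_shift (0 + 2 ^ P)).
  rewrite (count_range_ext 0 _ (hits_all (S P) Js)
             (hits_all P (if Bool.eqb (Nat.odd 0) b then drop_index (blk P) Js else Js)))
    by (intros y Hy; exact (hits_all_S P 0 y Js ltac:(lia))).
  rewrite (count_range_ext 0 _ (fun y => hits_all (S P) Js (0 + 2 ^ P + y))
             (hits_all P (if Bool.eqb (Nat.odd 1) b then drop_index (blk P) Js else Js)))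
    by (intros y Hy; rewrite <- (hits_all_S P 1 y Js) by lia; f_equal; lia).
  destruct b; simpl; lia.
Qed.

(* Exact count over one period: the digits being independent, the proportion
   of numbers hitting every block j of Js is prod_j (1 - 2^-(size of j)). *)
Lemma count_hits_all (P : nat) (Js : list nat) : NoDup Js ->
  count_range 0 (2 ^ P) (hits_all P Js) * prodl (map (fun j => 2 ^ block_size P j) Js)
  = 2 ^ P * prodl (map (fun j => 2 ^ block_size P j - 1) Js).
Proof.
  revert Js. induction P as [|P IH]; intros Js HJ.
  { destruct Js as [|j Js]; reflexivity. }
  set (Js' := drop_index (blk P) Js).
  assert (HJ' : NoDup Js') by (apply NoDup_filter, HJ).
  assert (Hsame : forall h : nat -> nat, prodl (map (fun j => h (block_size (S P) j)) Js')
                                  = prodl (map (fun j => h (block_size P j)) Js')).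
  { intros h. f_equal. apply map_ext_in. intros j Hj.
    apply filter_In in Hj as [_ Hj]. apply negb_true_iff in Hj.
    rewrite block_size_S, Hj, Nat.add_0_r. reflexivity. }
  rewrite count_hits_all_S.
  rewrite !(prodl_drop_index _ (blk P) Js HJ). fold Js'.
  rewrite (Hsame (fun k => 2 ^ k)), (Hsame (fun k => 2 ^ k - 1)).
  pose proof (IH Js HJ) as IHJ. pose proof (IH Js' HJ') as IHJ'.
  rewrite !(prodl_drop_index _ (blk P) Js HJ) in IHJ. fold Js' in IHJ.
  destruct (in_dec Nat.eq_dec (blk P) Js) as [Hin|Hnin].
  - rewrite block_size_S, Nat.eqb_refl, Nat.add_1_r, !Nat.pow_succ_r'.
    pose proof (pow2_pos (block_size P (blk P))) as Hu.
    destruct (2 ^ block_size P (blk P)) as [|u]; [lia|]. nia.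
  - unfold Js' in *. rewrite (drop_index_notin _ _ Hnin) in *.
    rewrite Nat.pow_succ_r'. nia.
Qed.

(* hits_all only looks at the digits below P, hence is 2^P-periodic. *)
Lemma hits_all_periodic (P : nat) (Js : list nat) (q y : nat) :
  y < 2 ^ P -> hits_all P Js (q * 2 ^ P + y) = hits_all P Js y.
Proof.
  intros Hy. apply forallb_ext_in. intros j _. apply existsb_ext_in.
  intros s Hs. apply in_seq in Hs. rewrite bit_low by lia. reflexivity.
Qed.

End DigitBlocks.

(* Telescoping: if 1 <= u n <= n on the window c < n <= c + L, then
   prod (1 - 1/u n) <= prod (1 - 1/n) = c / (c + L). *)
Lemma telescoping_product (u : nat -> nat) (L : nat) : forall c : nat,
  (forall n, c < n <= c + L -> 1 <= u n <= n) ->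
  prodl (map (fun n => u n - 1) (seq (S c) L)) * (c + L) <= prodl (map u (seq (S c) L)) * c.
Proof.
  induction L as [|L IH]; intros c Hu; simpl; [lia|].
  specialize (IH (S c) ltac:(intros; apply Hu; lia)).
  destruct (Hu (S c) ltac:(lia)) as [Hu1 Hu2].
  set (X := prodl (map (fun n => u n - 1) (seq (S (S c)) L))) in *.
  set (Y := prodl (map u (seq (S (S c)) L))) in *.
  destruct (u (S c)) as [|w]; [lia|].
  replace (S w - 1) with w by lia. replace (c + S L) with (S c + L) by lia.
  assert (Hw : w * X * (S c + L) <= w * (Y * S c))
    by (rewrite <- Nat.mul_assoc; apply Nat.mul_le_mono_l; exact IH).
  nia.
Qed.

Lemma hits_all_window_density (blk : nat -> nat) (b : bool) (P c L : nat) :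
  (forall n, c < n <= c + L -> 2 ^ block_size blk P n <= n) ->
  count_range 0 (2 ^ P) (hits_all blk b P (seq (S c) L)) * (c + L) <= 2 ^ P * c.
Proof.
  intros Hsz.
  pose proof (count_hits_all blk b P (seq (S c) L) (seq_NoDup L (S c))) as Hcount.
  pose proof (telescoping_product (fun n => 2 ^ block_size blk P n) L c) as Htel.
  set (A := prodl (map (fun n => 2 ^ block_size blk P n) (seq (S c) L))) in *.
  set (B := prodl (map (fun n => 2 ^ block_size blk P n - 1) (seq (S c) L))) in *.
  assert (HA : 0 < A) by apply prodl_pow2_pos.
  assert (HBA : B * (c + L) <= A * c).
  { apply Htel. intros n Hn. split; [apply pow2_pos | apply Hsz; lia]. }
  apply (Nat.mul_le_mono_pos_r _ _ A HA). nia.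
Qed.

Lemma count_range_periodic (T : nat) (p : nat -> bool) :
  (forall q y, y < T -> p (q * T + y) = p y) ->
  forall q, count_range 0 (q * T) p = q * count_range 0 T p.
Proof.
  intros Hp q. induction q as [|q IH]; [reflexivity|].
  replace (S q * T) with (q * T + T) by lia.
  rewrite count_range_app, IH, (count_range_shift (0 + q * T)).
  rewrite (count_range_ext 0 T (fun y => p (0 + q * T + y)) p)
    by (intros y Hy; apply Hp; lia).
  lia.
Qed.

Lemma count_upto_le_range (A : nat -> Prop) (p : nat -> bool) (K : nat) :
  (forall x, A x -> K < x -> p x = true) ->
  forall t, count_upto A t <= K + count_range 1 t p.
Proof.
  intros Hevent t. unfold count_upto, count_range.
  assert (Hgen : forall a, 1 <= a -> fold_right Nat.add 0
     (map (fun n => if excluded_middle_informative (A n) then 1 else 0) (seq a t))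
       <= (K + 1 - a) + length (filter p (seq a t))).
  { induction t as [|t IH]; intros a Ha; simpl; [lia|].
    specialize (IH (S a) ltac:(lia)).
    destruct (excluded_middle_informative (A a)) as [Hs|Hs].
    - destruct (Nat.le_gt_cases a K); [destruct (p a); simpl; lia|].
      rewrite (Hevent a Hs) by lia. simpl. lia.
    - destruct (p a); simpl; lia. }
  specialize (Hgen 1 (le_n 1)). lia.
Qed.

Lemma periodic_count_bound (A : nat -> Prop) (p : nat -> bool) (T K : nat) :
  0 < T -> (forall q y, y < T -> p (q * T + y) = p y) ->
  (forall x, A x -> K < x -> p x = true) ->
  forall t, count_upto A t * T <= (K + count_range 0 T p) * T + t * count_range 0 T p.
Proof.
  intros HT Hper Hevent t.
  set (a := count_range 0 T p). set (q := t / T).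
  assert (Hq : S t <= (q + 1) * T).
  { pose proof (Nat.div_mod t T ltac:(lia)) as Hdiv.
    pose proof (Nat.mod_upper_bound t T ltac:(lia)) as Hmod. fold q in Hdiv. nia. }
  assert (Hcount : count_upto A t <= K + (q + 1) * a).
  { apply (Nat.le_trans _ _ _ (count_upto_le_range A p K Hevent t)), Nat.add_le_mono_l.
    unfold a. rewrite <- (count_range_periodic T p Hper).
    replace ((q + 1) * T) with (1 + t + ((q + 1) * T - S t)) by lia.
    rewrite !count_range_app. change (0 + 1) with 1. lia. }
  pose proof (Nat.Div0.mul_div_le t T) as Hqt. fold q in Hqt. nia.
Qed.

Definition digit_coloring (m n : nat) : bool := bit m n.

Definition maxl (l : list nat) : nat := fold_right Nat.max 0 l.

Lemma maxl_ge (x : nat) (l : list nat) : In x l -> x <= maxl l.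
Proof.
  induction l as [|y l IH]; simpl; [intros []|].
  intros [->|Hx]; [lia|]. specialize (IH Hx). lia.
Qed.

Section MonochromaticCopies.
Variable V : Type.
Variable adj : V -> V -> Prop.
Variable F : nat -> list V.
Variable f : V -> nat.
Hypothesis Hinj : forall u v, f u = f v -> u = v.
Hypothesis Hrul : forall n, ruling adj (F n).
Hypothesis Hdisj : forall m n, m <> n -> forall v, In v (F m) -> ~ In v (F n).

Lemma ruling_eventually (Js : list nat) : exists K, forall n, In n Js -> forall v, K < f v ->
  exists w, In w (F n) /\ adj v w /\ f w < f v.
Proof.
  assert (Hone : forall n, exists K, forall v, K < f v ->
                   exists w, In w (F n) /\ adj v w /\ f w < f v).
  { intros n. destruct (Hrul n) as [_ [Lx HL]].
    exists (Nat.max (maxl (map f (F n))) (maxl (map f Lx))). intros v Hv.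
    destruct (classic (exists w, In w (F n) /\ adj v w)) as [[w [Hw Ha]]|Hno].
    - exists w. pose proof (maxl_ge _ _ (in_map f _ _ Hw)). repeat split; auto; lia.
    - exfalso. destruct (classic (In v (F n))) as [Hi|Hi].
      + pose proof (maxl_ge _ _ (in_map f _ _ Hi)). lia.
      + pose proof (maxl_ge _ _ (in_map f _ _ (HL v Hi Hno))). lia. }
  induction Js as [|n Js IH]; [exists 0; intros n []|].
  destruct IH as [K1 HK1], (Hone n) as [K2 HK2]. exists (Nat.max K1 K2).
  intros m [<-|Hm] v Hv; [apply HK2 | apply HK1]; auto; lia.
Qed.

Lemma positions_bounded (Js : list nat) : exists P, forall n w, In n Js -> In w (F n) -> f w < P.
Proof.
  exists (S (maxl (concat (map (fun n => map f (F n)) Js)))). intros n w Hn Hw.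
  apply Nat.lt_succ_r, maxl_ge, in_concat. exists (map f (F n)).
  split; [apply in_map_iff; eauto | apply in_map, Hw].
Qed.

Lemma block_labelling (Js : list nat) : exists blk : nat -> nat,
  (forall n w, In n Js -> In w (F n) -> blk (f w) = n) /\
  (forall n s, In n Js -> blk s = n -> In s (map f (F n))).
Proof.
  exists (fun s => match find (fun n => existsb (Nat.eqb s) (map f (F n))) Js with
                   | Some n => n | None => S (maxl Js) end).
  split.
  - intros n w Hn Hw.
    destruct (find _ Js) as [n'|] eqn:E.
    + apply find_some in E as [_ Ex]. apply existsb_exists in Ex as [s [Hs Hs']].
      apply Nat.eqb_eq in Hs'. subst s. apply in_map_iff in Hs as [w' [Hw' Hw'']].
      apply Hinj in Hw'. subst w'.
      destruct (Nat.eq_dec n' n) as [|Hne]; [assumption|].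
      exfalso. exact (Hdisj _ _ Hne w Hw'' Hw).
    + exfalso. pose proof (find_none _ _ E n Hn) as Hfalse. simpl in Hfalse.
      rewrite (proj2 (existsb_exists _ _)) in Hfalse; [discriminate|].
      exists (f w). split; [apply in_map, Hw | apply Nat.eqb_refl].
  - intros n s Hn Hs.
    destruct (find _ Js) as [n'|] eqn:E.
    + subst n'. apply find_some in E as [_ Ex]. apply existsb_exists in Ex as [s' [Hs1 Hs2]].
      apply Nat.eqb_eq in Hs2. subst. exact Hs1.
    + subst n. pose proof (maxl_ge _ _ Hn). lia.
Qed.

Lemma block_size_le (blk : nat -> nat) (Js : list nat) :
  (forall n s, In n Js -> blk s = n -> In s (map f (F n))) ->
  forall P n, In n Js -> block_size blk P n <= length (F n).
Proof.
  intros Hlab P n Hn. unfold block_size. rewrite <- (length_map f (F n)).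
  apply NoDup_incl_length; [apply NoDup_filter, seq_NoDup|].
  intros s Hs. apply filter_In in Hs as [_ Hs]. apply Hlab; [exact Hn | apply Nat.eqb_eq, Hs].
Qed.

(* Key step: for a copy monochromatic in colour b, every large x = f v hits
   every block: the neighbour w of v in F n gives the digit f w of x equal to b. *)
Lemma image_eventually_hits (b : bool)
  (Hb : forall u v, adj u v -> edge_color digit_coloring (f u) (f v) = b)
  (Js : list nat) (blk : nat -> nat) (P : nat)
  (Hlab : forall n w, In n Js -> In w (F n) -> blk (f w) = n)
  (HP : forall n w, In n Js -> In w (F n) -> f w < P) :
  exists K, forall x, image f x -> K < x -> hits_all blk b P Js x = true.
Proof.
  destruct (ruling_eventually Js) as [K HK]. exists K.
  intros x [v <-] Hv. apply forallb_forall. intros n Hn.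
  destruct (HK n Hn v Hv) as [w [Hw [Ha Hlt]]].
  apply existsb_exists. exists (f w). split.
  - apply in_seq. specialize (HP n w Hn Hw). lia.
  - rewrite (Hlab n w Hn Hw), Nat.eqb_refl. simpl.
    specialize (Hb v w Ha). unfold edge_color in Hb.
    replace (f v <? f w) with false in Hb by (symmetry; apply Nat.ltb_ge; lia).
    unfold digit_coloring in Hb. rewrite Hb. apply eqb_reflx.
Qed.

Lemma mono_copy_window_bound (b : bool)
  (Hb : forall u v, adj u v -> edge_color digit_coloring (f u) (f v) = b)
  (c : nat) (Hsz : forall n, c < n -> 2 ^ length (F n) <= n) (L : nat) :
  exists K, forall t, count_upto (image f) t * (c + L) <= K * (c + L) + t * c.
Proof.
  set (Js := seq (S c) L).
  destruct (block_labelling Js) as [blk [Hlab1 Hlab2]].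
  destruct (positions_bounded Js) as [P HP].
  destruct (image_eventually_hits b Hb Js blk P Hlab1 HP) as [K HK].
  set (a := count_range 0 (2 ^ P) (hits_all blk b P Js)).
  assert (Ha : a * (c + L) <= 2 ^ P * c).
  { apply hits_all_window_density. intros n Hn.
    assert (Hin : In n Js) by (apply in_seq; lia).
    apply (Nat.le_trans _ (2 ^ length (F n))); [|apply Hsz; lia].
    apply Nat.pow_le_mono_r; [lia|]. exact (block_size_le blk Js Hlab2 P n Hin). }
  pose proof (periodic_count_bound (image f) _ (2 ^ P) K (pow2_pos P)
                (hits_all_periodic blk b P Js) HK) as Hcount. fold a in Hcount.
  exists (K + a). intros t. specialize (Hcount t).
  apply (Nat.mul_le_mono_pos_r _ _ (2 ^ P) (pow2_pos P)). nia.
Qed.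

End MonochromaticCopies.

Local Open Scope R_scope.

Lemma upper_density_zero_of_linear_bounds (A : nat -> Prop) :
  (forall eps, 0 < eps -> exists K, forall t, INR (count_upto A t) <= K + eps * INR t) ->
  upper_density A = Finite 0.
Proof.
  intros Hbound. unfold upper_density.
  apply is_LimSup_seq_unique, is_lim_LimSup_seq, is_lim_seq_spec.
  intros eps. pose proof (cond_pos eps) as He.
  destruct (Hbound (eps / 2) ltac:(lra)) as [K HK].
  destruct (INR_archimed (eps / 2) K ltac:(lra)) as [T HT].
  exists (S T). intros t Ht. specialize (HK t).
  assert (Ht0 : INR T < INR t) by (apply lt_INR; lia).
  assert (HT0 : 0 <= INR T) by apply pos_INR.
  assert (Hc : 0 <= INR (count_upto A t)) by apply pos_INR.
  assert (Hlt : INR (count_upto A t) < eps * INR t) by nra.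
  rewrite Rminus_0_r, Rabs_pos_eq by (apply Rdiv_le_0_compat; lra).
  apply Rlt_div_l; lra.
Qed.

Lemma upper_density_zero_of_window_bounds (A : nat -> Prop) (c : nat) :
  (forall L, exists K, forall t,
     (count_upto A t * (c + L) <= K * (c + L) + t * c)%nat) ->
  upper_density A = Finite 0.
Proof.
  intros Hwin. apply upper_density_zero_of_linear_bounds. intros eps He.
  destruct (INR_archimed eps (INR c) He) as [L HL].
  destruct (Hwin L) as [K HK]. exists (INR K). intros t.
  specialize (HK t). apply le_INR in HK. repeat rewrite ?mult_INR, ?plus_INR in HK.
  pose proof (pos_INR c). pose proof (pos_INR L). pose proof (pos_INR t).
  assert (Hc : 0 <= eps * INR c) by (apply Rmult_le_pos; lra).
  assert (HL0 : 0 < INR L) by nra.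
  assert (Htc : INR t * INR c <= INR t * (eps * (INR c + INR L)))
    by (apply Rmult_le_compat_l; lra).
  apply (Rmult_le_reg_r (INR c + INR L)); [lra|].
  replace ((INR K + eps * INR t) * (INR c + INR L))
    with (INR K * (INR c + INR L) + INR t * (eps * (INR c + INR L))) by ring.
  lra.
Qed.

(* The hypothesis |F n| <= log2 n, in integer form. *)
Lemma pow2_le_of_log2_bound (k n : nat) :
  (1 <= n)%nat -> INR k <= ln (INR n) / ln 2 -> (2 ^ k <= n)%nat.
Proof.
  intros Hn Hk. pose proof ln_lt_2 as L2.
  assert (Hl : 0 < ln 2) by (apply Rlt_trans with (/ 2); lra).
  assert (Hkl : ln (2 ^ k) <= ln (INR n)).
  { rewrite ln_pow by lra. apply Rle_div_r in Hk; lra. }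
  destruct (Nat.le_gt_cases (2 ^ k) n) as [|Hc]; [assumption|]. exfalso.
  apply lt_INR in Hc. rewrite pow_INR in Hc. replace (INR 2) with 2 in Hc by (simpl; lra).
  assert (Hn0 : 0 < INR n) by (apply lt_0_INR; lia).
  pose proof (ln_increasing _ _ Hn0 Hc). lra.
Qed.

Theorem mainTheorem9 (V : Type) (adj : V -> V -> Prop)
  (Hg : simple_graph adj) (Hinf : countably_infinite V)
  (F : nat -> list V)
  (Hrul : forall n, ruling adj (F n))
  (Hdisj : forall m n, m <> n -> forall v, In v (F m) -> ~ In v (F n))
  (Hsize : exists N : nat, forall n : nat, (N <= n)%nat ->
             INR (length (F n)) <= ln (INR n) / ln 2) :
  ~ ramsey_dense adj /\
  exists c : nat -> nat -> bool, forall f : V -> nat,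
    mono_copy adj c f -> upper_density (image f) = Finite 0.
Proof.
  destruct Hsize as [N HN].
  assert (Hsz : forall n, (N < n)%nat -> (2 ^ length (F n) <= n)%nat)
    by (intros n Hn; apply pow2_le_of_log2_bound; [lia | apply HN; lia]).
  assert (Hzero : forall f, mono_copy adj digit_coloring f -> upper_density (image f) = Finite 0).
  { intros f [Hinj [b Hb]].
    apply (upper_density_zero_of_window_bounds _ N).
    exact (mono_copy_window_bound V adj F f Hinj Hrul Hdisj b Hb N Hsz). }
  split.
  - intros Hdense. destruct (Hdense digit_coloring) as [f [Hf Hpos]].
    rewrite (Hzero f Hf) in Hpos. simpl in Hpos. lra.
  - exists digit_coloring. exact Hzero.
Qed.
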